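(* There exists $\delta\in(0,1)$, independent of $c\in(c_0,c_s)$, such that for every $c\in(c_0,c_s)$, $$\max_{\mathbb R}\eta_c=\eta_c(0)\le 1-\delta^2\frac{c^2}{c_s^2},$$ equivalently $\min_{\mathbb R}\sqrt{1-\eta_c}=\sqrt{1-\eta_c(0)}\ge\delta\,c/c_s$.
   Context: Standing assumptions: $f\in\mathcal C^3(\mathbb R_+)$ with $f(1)=0$ and $f'(1)<0$; $c_s:=\sqrt{-2f'(1)}$; $F(r):=\int_r^1 f(\rho)\,d\rho$. Assume (H1) $\frac{c_s^2}{4}(1-\rho)^2\le F(\rho)$ for all $\rho$; (H2) there exist $M\ge 0$, $q\in[2,\infty)$ with $F(\rho)\le M|1-\rho|^q$ for all $\rho\ge 2$; (H3) $f''(1)+3f'(1)\neq 0$. For $c\in(c_0,c_s)$ (with $c_0\in(0,c_s)$ the threshold of existence), $Q_c=(\eta_c,v_c)\in H^1\times L^2$, $\sup\eta_c<1$, denotes the even non-constant solution (unique up to translation) of $\frac c2\eta=v(1-\eta)$, $cv=f(1-\eta)-v^2-\frac{\eta''}{2(1-\eta)}-\frac{(\eta')^2}{4(1-\eta)^2}$; $\eta_c$ attains its maximum at $0$. *)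

From Stdlib Require Import Reals.
From Coquelicot Require Import Coquelicot.
Open Scope R_scope.

Definition C3_Rplus (f : R -> R) : Prop :=
  (forall x, 0 < x ->
     (forall k, (k <= 3)%nat -> ex_derive_n f k x) /\
     continuous (Derive_n f 3) x) /\
  filterlim f (at_right 0) (locally (f 0)).

Definition cs (f : R -> R) : R := sqrt (- 2 * Derive f 1).

Definition Fpot (f : R -> R) (r : R) : R := RInt f r 1.

Definition standing_assumptions (f : R -> R) : Prop :=
  C3_Rplus f /\ f 1 = 0 /\ Derive f 1 < 0 /\
  (forall rho, 0 <= rho -> (cs f) ^ 2 / 4 * (1 - rho) ^ 2 <= Fpot f rho) /\
  (exists M q, 0 <= M /\ 2 <= q /\
     forall rho, 2 <= rho -> Fpot f rho <= M * Rpower (Rabs (1 - rho)) q) /\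
  Derive_n f 2 1 + 3 * Derive f 1 <> 0.

Definition L2 (u : R -> R) : Prop :=
  ex_RInt_gen (fun x => (u x) ^ 2) (Rbar_locally m_infty) (Rbar_locally p_infty).

(** (eta, v) is an even non-constant travelling-wave solution of speed c:
    eta in H^1 (classical C^2 function with eta, eta' in L^2), v in L^2,
    sup eta < 1, and the system
       c/2 eta = v (1 - eta),
       c v = f(1-eta) - v^2 - eta''/(2(1-eta)) - (eta')^2/(4(1-eta)^2). *)
Definition TW_solution (f : R -> R) (c : R) (eta v : R -> R) : Prop :=
  (forall x, ex_derive eta x) /\
  (forall x, ex_derive (Derive eta) x) /\
  (forall x, continuous (Derive (Derive eta)) x) /\
  L2 eta /\ L2 (Derive eta) /\ L2 v /\
  (exists m, m < 1 /\ forall x, eta x <= m) /\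
  (forall x, eta (- x) = eta x) /\ (forall x, v (- x) = v x) /\
  (exists x y, eta x <> eta y) /\
  (forall x, c / 2 * eta x = v x * (1 - eta x)) /\
  (forall x, c * v x = f (1 - eta x) - (v x) ^ 2
                       - Derive (Derive eta) x / (2 * (1 - eta x))
                       - (Derive eta x) ^ 2 / (4 * (1 - eta x) ^ 2)).

Definition has_TW (f : R -> R) (c : R) : Prop :=
  exists eta v, TW_solution f c eta v.

Definition c0 (f : R -> R) : Rbar :=
  Glb_Rbar (fun c => 0 < c < cs f /\ has_TW f c).

(* Multiplying the second equation by [eta'] gives the first integral
   [eta'^2 = G (eta)], [G s = 4 (1 - s) F (1 - s) - c^2 s^2]; the constant of integration
   is [0] because [eta] and [eta'] are square integrable. By (H1), [G > 0] on
   [(-oo, 1 - c^2/c_s^2)] away from [0], and [0] is a double zero of [G] which the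
   non-constant [eta] never reaches, so [eta > 0] and every critical value of [eta] is a
   zero of [G]. At the last critical point [T >= 0], [eta T] is a simple zero of [G] with
   [G > 0] below it; an interior minimum argument on [[0, T]] and evenness show that
   [eta 0 = eta T] is the maximum. Finally [G (eta 0) = 0] reads
   [c^2 eta(0)^2 = 4 (1 - eta 0) F (1 - eta 0)], and [F] is bounded on [(0, 1]], so
   [1 - eta 0] is at least a fixed multiple of [c^2]. *)

From Stdlib Require Import Reals Lra Lia Classical.
From Coquelicot Require Import Coquelicot.
Open Scope R_scope.

Ltac eta_reduce :=
  repeat match goal with |- context [fun y : R => ?g y] => change (fun y : R => g y) with g end.

Lemma derivable_continuous (w : R -> R) x : ex_derive w x -> continuous w x.
Proof. exact (@ex_derive_continuous R_AbsRing R_NormedModule w x). Qed.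

Lemma continuous_Rabs_lt (w : R -> R) s : continuous w s ->
  forall eps, 0 < eps -> exists d, 0 < d /\ forall t, Rabs (t - s) < d -> Rabs (w t - w s) < eps.
Proof.
  intros Hc eps Heps.
  destruct (proj1 (filterlim_locally w (w s)) Hc (mkposreal eps Heps)) as [d Hd].
  exists d; split; [apply cond_pos | intros t Ht; exact (Hd t Ht)].
Qed.

Lemma continuous_bounded_segment (g : R -> R) a b : a <= b ->
  (forall x, a <= x <= b -> continuous g x) ->
  exists B, forall x, a <= x <= b -> Rabs (g x) <= B.
Proof.
  intros Hab Hc.
  destruct (continuity_ab_maj (fun x => Rabs (g x)) a b Hab) as [M [HM _]].
  { intros x Hx. apply continuity_pt_filterlim, (continuous_comp g Rabs); auto.
    apply continuous_Rabs. }
  now exists (Rabs (g M)).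
Qed.

Lemma ex_RInt_sqr (w : R -> R) a b : (forall x, ex_derive w x) -> ex_RInt (fun x => (w x)^2) a b.
Proof.
  intros Hd. apply (@ex_RInt_continuous R_CompleteNormedModule); intros.
  apply derivable_continuous. auto_derive. auto.
Qed.

Lemma RInt_ge_const (g : R -> R) a b k : a <= b -> ex_RInt g a b ->
  (forall x, a <= x <= b -> k <= g x) -> k * (b - a) <= RInt g a b.
Proof.
  intros Hab Hex Hk.
  replace (k * (b - a)) with (RInt (fun _ => k) a b)
    by (rewrite RInt_const; unfold scal; simpl; unfold mult; simpl; ring).
  apply RInt_le; auto using ex_RInt_const.
  intros; apply Hk; lra.
Qed.

Lemma Rabs_between_le z s x : Rmin z s <= x <= Rmax z s -> Rabs (x - z) <= Rabs (s - z).
Proof.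
  unfold Rmin, Rmax. destruct (Rle_dec z s); intros [H1 H2].
  - rewrite !Rabs_right by lra. lra.
  - rewrite !Rabs_left1 by lra. lra.
Qed.

Lemma MVT_Rabs_le (g g' : R -> R) z s B :
  (forall x, Rmin z s <= x <= Rmax z s -> is_derive g x (g' x)) ->
  (forall x, Rmin z s <= x <= Rmax z s -> Rabs (g' x) <= B) ->
  Rabs (g s - g z) <= B * Rabs (s - z).
Proof.
  intros Hd Hb.
  assert (Hmvt : forall a b, a < b -> (forall x, a <= x <= b -> is_derive g x (g' x)) ->
            (forall x, a <= x <= b -> Rabs (g' x) <= B) ->
            Rabs (g b - g a) <= B * Rabs (b - a)).
  { intros a b Hab Hd' Hb'.
    destruct (MVT_cor2 g g' a b Hab) as [x [-> Hx]].
    { intros x Hx. apply is_derive_Reals, Hd'. lra. }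
    rewrite Rabs_mult. apply Rmult_le_compat_r; [apply Rabs_pos | apply Hb'; lra]. }
  destruct (Rtotal_order z s) as [Hlt | [-> | Hgt]].
  - rewrite Rmin_left, Rmax_right in * by lra. auto.
  - unfold Rminus. rewrite !Rplus_opp_r, Rabs_R0, Rmult_0_r. apply Rle_refl.
  - rewrite Rmin_right, Rmax_left in * by lra.
    rewrite <- Rabs_Ropp, <- (Rabs_Ropp (s - z)), !Ropp_minus_distr. auto.
Qed.

Lemma is_derive_0_constant (Q : R -> R) : (forall x, is_derive Q x 0) -> forall x, Q x = Q 0.
Proof.
  intros H x.
  destruct (Rtotal_order 0 x) as [h | [<- | h]]; auto.
  - destruct (MVT_cor2 Q (fun _ => 0) 0 x h) as [y [Hy _]];
      [intros; apply is_derive_Reals; auto | lra].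
  - destruct (MVT_cor2 Q (fun _ => 0) x 0 h) as [y [Hy _]];
      [intros; apply is_derive_Reals; auto | lra].
Qed.

Lemma ex_RInt_gen_tail (g : R -> R) :
  ex_RInt_gen g (Rbar_locally m_infty) (Rbar_locally p_infty) ->
  (forall a b, ex_RInt g a b) ->
  forall eps, 0 < eps -> exists A, forall a b, A <= a -> A <= b -> Rabs (RInt g a b) < eps.
Proof.
  intros [l Hl] Hex eps Heps.
  assert (Hb : locally l (ball l (mkposreal _ (ltac:(lra) : 0 < eps / 2))))
    by apply locally_ball.
  destruct (Hl _ Hb) as [P Q [M HP] [M' HQ] Hp].
  exists (Rabs M' + 1). intros a b Ha Hb'.
  pose proof (Rle_abs M').
  destruct (Hp (M - 1) a) as [y1 [Hy1 Hb1]]; [apply HP; lra | apply HQ; lra |].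
  destruct (Hp (M - 1) b) as [y2 [Hy2 Hb2]]; [apply HP; lra | apply HQ; lra |].
  simpl in *.
  assert (E : RInt g a b = RInt g (M - 1) b - RInt g (M - 1) a).
  { rewrite <- (RInt_Chasles g (M - 1) a b) by auto. unfold plus; simpl. lra. }
  rewrite E, (is_RInt_unique _ _ _ _ Hy1), (is_RInt_unique _ _ _ _ Hy2).
  unfold ball in Hb1, Hb2; simpl in Hb1, Hb2.
  unfold AbsRing_ball, abs, minus, plus, opp in Hb1, Hb2; simpl in Hb1, Hb2.
  apply Rabs_lt_between in Hb1. apply Rabs_lt_between in Hb2.
  apply Rabs_lt_between. lra.
Qed.

Lemma L2_exists_small_value (w : R -> R) : (forall x, ex_derive w x) -> L2 w ->
  forall d, 0 < d -> exists A, forall t, A <= t -> exists s, t <= s <= t + 1 /\ (w s)^2 < d.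
Proof.
  intros Hd Hw d Hdp.
  destruct (ex_RInt_gen_tail _ Hw (fun a b => ex_RInt_sqr w a b Hd) d Hdp) as [A HA].
  exists A. intros t Ht. apply NNPP; intro Hn.
  assert (Hge : forall s, t <= s <= t + 1 -> d <= (w s)^2).
  { intros s Hs. apply Rnot_lt_le. intro. apply Hn. now exists s. }
  pose proof (RInt_ge_const _ t (t + 1) d ltac:(lra) (ex_RInt_sqr w _ _ Hd) Hge).
  specialize (HA t (t + 1) ltac:(lra) ltac:(lra)). apply Rabs_lt_between in HA. lra.
Qed.

Lemma RInt_sqr_diff_le (w : R -> R) t s :
  (forall x, ex_derive w x) -> (forall x, ex_derive (Derive w) x) -> t <= s ->
  Rabs ((w s)^2 - (w t)^2) <= RInt (fun x => (w x)^2) t s + RInt (fun x => (Derive w x)^2) t s.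
Proof.
  intros Hd Hd2 Hts.
  assert (Hcont : forall x, continuous (fun x => 2 * w x * Derive w x) x)
    by (intros; apply derivable_continuous; auto_derive; auto).
  assert (Hint : RInt (fun x => 2 * w x * Derive w x) t s = (w s)^2 - (w t)^2).
  { rewrite <- (RInt_Derive (fun x => (w x)^2)).
    - apply RInt_ext. intros x _. symmetry. apply is_derive_unique.
      auto_derive; auto. eta_reduce. ring.
    - intros; auto_derive; auto.
    - intros x _. apply (continuous_ext (fun x => 2 * w x * Derive w x)); auto.
      intros y. symmetry. apply is_derive_unique. auto_derive; auto. eta_reduce. ring. }
  rewrite <- Hint, <- (RInt_plus (V := R_CompleteNormedModule)) by (apply ex_RInt_sqr; auto).
  eapply Rle_trans.
  { apply abs_RInt_le; auto. apply (@ex_RInt_continuous R_CompleteNormedModule); auto. }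
  apply RInt_le; auto.
  - apply (@ex_RInt_continuous R_CompleteNormedModule). intros.
    apply continuous_comp; [auto | apply continuous_Rabs].
  - apply (ex_RInt_plus (V := R_CompleteNormedModule)); apply ex_RInt_sqr; auto.
  - intros x _. unfold plus; simpl.
    rewrite !Rabs_mult, (Rabs_right 2) by lra.
    pose proof (pow2_ge_0 (Rabs (w x) - Rabs (Derive w x))).
    pose proof (pow2_abs (w x)). pose proof (pow2_abs (Derive w x)). simpl in *. nra.
Qed.

(* H^1 functions vanish at infinity: [w^2] is small at some point of every unit
   interval far out, and its variation there is bounded by the local H^1 norm. *)
Lemma H1_vanishes_at_p_infty (w : R -> R) :
  (forall x, ex_derive w x) -> (forall x, ex_derive (Derive w) x) ->
  L2 w -> L2 (Derive w) ->
  forall eps, 0 < eps -> exists A, forall t, A <= t -> Rabs (w t) < eps.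
Proof.
  intros Hd Hd2 Hw Hw' eps Heps.
  set (d := eps^2 / 3).
  assert (Hdp : 0 < d) by (unfold d; nra).
  destruct (L2_exists_small_value w Hd Hw d Hdp) as [A0 HA0].
  destruct (ex_RInt_gen_tail _ Hw (fun a b => ex_RInt_sqr w a b Hd) d Hdp) as [A1 HA1].
  destruct (ex_RInt_gen_tail _ Hw' (fun a b => ex_RInt_sqr (Derive w) a b Hd2) d Hdp)
    as [A2 HA2].
  exists (Rmax A0 (Rmax A1 A2)). intros t Ht.
  pose proof (Rmax_l A0 (Rmax A1 A2)). pose proof (Rmax_r A0 (Rmax A1 A2)).
  pose proof (Rmax_l A1 A2). pose proof (Rmax_r A1 A2).
  destruct (HA0 t ltac:(lra)) as [s [Hts Hws]].
  pose proof (RInt_sqr_diff_le w t s Hd Hd2 ltac:(lra)) as Hdiff.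
  specialize (HA1 t s ltac:(lra) ltac:(lra)). specialize (HA2 t s ltac:(lra) ltac:(lra)).
  apply Rabs_lt_between in HA1. apply Rabs_lt_between in HA2.
  apply Rabs_le_between in Hdiff.
  rewrite <- (Rabs_right eps) by lra. apply Rsqr_lt_abs_0. unfold Rsqr, d in *. nra.
Qed.

Lemma lub_of_zeros_is_zero (w : R -> R) z t0 t1 s : (forall x, continuous w x) ->
  is_lub (fun t => t0 <= t <= t1 /\ w t = z) s -> w t0 = z -> t0 <= t1 ->
  w s = z /\ t0 <= s <= t1.
Proof.
  intros Hc [Hub Hlub] H0 H01.
  assert (t0 <= s) by (apply Hub; split; [lra | auto]).
  assert (s <= t1) by (apply Hlub; intros x [Hx _]; lra).
  split; [| lra].
  apply NNPP; intro Hn.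
  assert (Hp : 0 < Rabs (w s - z)) by (apply Rabs_pos_lt; intro; apply Hn; lra).
  destruct (continuous_Rabs_lt w s (Hc s) _ Hp) as [d [Hdp Hd]].
  assert (Hex : exists e, t0 <= e <= t1 /\ w e = z /\ s - d < e).
  { apply NNPP; intro Hne.
    enough (s <= s - d) by lra.
    apply Hlub. intros x [Hx Hwx]. apply Rnot_lt_le. intro. apply Hne. now exists x. }
  destruct Hex as [e [He [Hwe Hse]]].
  assert (e <= s) by (apply Hub; auto).
  specialize (Hd e ltac:(rewrite Rabs_left1 by lra; lra)).
  rewrite Hwe, <- Rabs_Ropp, Ropp_minus_distr in Hd. lra.
Qed.

(* Gronwall: [exp (-(1+K) t) (w t - z)^2] is nonincreasing while [w] stays near [z],
   so it stays [0] after the last time [w = z]. *)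
Lemma quadratic_bound_zero_forward (w : R -> R) z K rho : 0 < rho -> 0 <= K ->
  (forall x, ex_derive w x) ->
  (forall t, Rabs (w t - z) <= rho -> (Derive w t)^2 <= K * (w t - z)^2) ->
  forall t0 t1, w t0 = z -> t0 <= t1 -> w t1 = z.
Proof.
  intros Hr HK Hd Hb t0 t1 H0 H01.
  apply NNPP; intro Hn.
  assert (Hc : forall x, continuous w x) by (intros; apply derivable_continuous; auto).
  set (E := fun t => t0 <= t <= t1 /\ w t = z).
  assert (HE : bound E) by (exists t1; intros x [Hx _]; lra).
  destruct (completeness E HE (ex_intro _ t0 (conj (conj (Rle_refl _) H01) H0))) as [s Hs].
  destruct (lub_of_zeros_is_zero w z t0 t1 s Hc Hs H0 H01) as [Hws Hst].
  assert (s < t1) by (destruct (Req_dec s t1); [subst; congruence | lra]).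
  destruct (continuous_Rabs_lt w s (Hc s) rho Hr) as [d [Hdp Hd']].
  set (b := Rmin (s + d / 2) t1).
  assert (Hb1 : s < b) by (unfold b; apply Rmin_case; lra).
  assert (Hb2 : b <= t1) by apply Rmin_r.
  assert (Hb3 : b <= s + d / 2) by apply Rmin_l.
  set (h := fun t => exp (-(1 + K) * t) * (w t - z)^2).
  set (h' := fun t => exp (-(1 + K) * t) * (2 * (w t - z) * Derive w t - (1 + K) * (w t - z)^2)).
  destruct (MVT_cor2 h h' s b Hb1) as [xi [Hxi Hxir]].
  { intros y _. apply is_derive_Reals. unfold h, h'. auto_derive; auto. eta_reduce. ring. }
  assert (Hwb : w b = z).
  { assert (Hxib : Rabs (w xi - z) <= rho).
    { rewrite <- Hws. left. apply Hd'. rewrite Rabs_right by lra. lra. }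
    pose proof (Hb xi Hxib).
    assert (Hh' : h' xi <= 0).
    { unfold h'. pose proof (exp_pos (-(1 + K) * xi)).
      pose proof (pow2_ge_0 (w xi - z - Derive w xi)). nra. }
    assert (h s = 0) by (unfold h; rewrite Hws; ring).
    assert (h b <= 0) by nra.
    unfold h in *. pose proof (exp_pos (-(1 + K) * b)).
    assert ((w b - z)^2 <= 0) by nra. nra. }
  assert (b <= s) by (apply Hs; split; [lra | auto]).
  lra.
Qed.

Lemma sign_near_simple_zero (g : R -> R) T l : g T = 0 -> derivable_pt_lim g T l -> l <> 0 ->
  exists d, 0 < d /\ forall t, 0 < Rabs (t - T) < d -> 0 < l * (g t / (t - T)).
Proof.
  intros H0 Hd Hl.
  assert (Hl2 : 0 < Rabs l / 2) by (pose proof (Rabs_pos_lt l Hl); lra).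
  destruct (Hd _ Hl2) as [d Hdd]. exists d. split; [apply cond_pos |].
  intros t [Ht0 Htd].
  assert (Htt : t - T <> 0) by (intro E; rewrite E, Rabs_R0 in Ht0; lra).
  specialize (Hdd (t - T) Htt Htd).
  replace (T + (t - T)) with t in Hdd by ring. rewrite H0, Rminus_0_r in Hdd.
  destruct (Rle_or_lt 0 l) as [Hp | Hn].
  - rewrite (Rabs_right l) in Hdd, Hl2 by lra. apply Rabs_lt_between in Hdd.
    apply Rmult_lt_0_compat; lra.
  - rewrite (Rabs_left l) in Hdd, Hl2 by lra. apply Rabs_lt_between in Hdd. nra.
Qed.

(* If [w'(t) > 0], the mean value theorem gives a point of negative slope further
   right, and then the intermediate value theorem a zero of [w'] after [T]. *)
Lemma Derive_neg_of_vanishing (w : R -> R) T :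
  (forall x, ex_derive w x) -> (forall x, continuous (Derive w) x) ->
  (forall t, 0 < w t) ->
  (forall eps, 0 < eps -> exists A, forall t, A <= t -> Rabs (w t) < eps) ->
  (forall t, T < t -> Derive w t <> 0) -> forall t, T < t -> Derive w t < 0.
Proof.
  intros Hd Hc Hpos Hvan Hnz t Ht.
  destruct (Rtotal_order (Derive w t) 0) as [? | [E | Hp]]; auto;
    [exfalso; exact (Hnz t Ht E) |].
  exfalso.
  destruct (Hvan _ (Hpos t)) as [A HA].
  set (s := Rmax A t + 1). pose proof (Rmax_l A t). pose proof (Rmax_r A t).
  destruct (MVT_cor2 w (Derive w) t s ltac:(unfold s; lra)) as [xi [Hxi Hxir]].
  { intros; apply is_derive_Reals, Derive_correct; auto. }
  specialize (HA s ltac:(unfold s; lra)). apply Rabs_lt_between in HA.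
  assert (Hxn : Derive w xi < 0).
  { apply Rnot_le_lt. intro.
    assert (0 <= Derive w xi * (s - t)) by (apply Rmult_le_pos; lra). lra. }
  destruct (IVT_gen (Derive w) t xi 0) as [y [Hy Hy0]].
  { intros x. apply continuity_pt_filterlim, Hc. }
  { rewrite Rmin_right, Rmax_left by lra. lra. }
  rewrite Rmin_left, Rmax_right in Hy by lra.
  apply (Hnz y); [lra | auto].
Qed.

Lemma Fpot_1 (f : R -> R) : Fpot f 1 = 0.
Proof. apply (RInt_point (V := R_CompleteNormedModule)). Qed.

Definition G (f : R -> R) (c s : R) : R := 4 * (1 - s) * Fpot f (1 - s) - c^2 * s^2.
Definition dG (f : R -> R) (c s : R) : R :=
  -4 * Fpot f (1 - s) + 4 * (1 - s) * f (1 - s) - 2 * c^2 * s.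
Definition ddG (f : R -> R) (c s : R) : R :=
  -8 * f (1 - s) - 4 * (1 - s) * Derive f (1 - s) - 2 * c^2.

Section Nonlinearity.

Variable f : R -> R.
Hypothesis Hf : standing_assumptions f.

Lemma f_derivable x : 0 < x -> ex_derive f x.
Proof. destruct Hf as [[H _] _]. intros Hx. exact (proj1 (H x Hx) 1%nat ltac:(lia)). Qed.

Lemma Derive_f_derivable x : 0 < x -> ex_derive (Derive f) x.
Proof. destruct Hf as [[H _] _]. intros Hx. exact (proj1 (H x Hx) 2%nat ltac:(lia)). Qed.

Lemma f_continuous x : 0 < x -> continuous f x.
Proof. intros. apply derivable_continuous, f_derivable; auto. Qed.

Lemma ex_RInt_f a b : 0 < a -> 0 < b -> ex_RInt f a b.
Proof.
  intros Ha Hb. apply (@ex_RInt_continuous R_CompleteNormedModule).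
  intros z Hz. apply f_continuous. pose proof (Rmin_glb_lt a b 0 Ha Hb). lra.
Qed.

Lemma Fpot_is_derive r : 0 < r -> is_derive (Fpot f) r (- f r).
Proof.
  intros Hr. unfold Fpot.
  apply (is_derive_RInt' (V := R_NormedModule) f (fun a => RInt f a 1) r 1).
  - exists (mkposreal (r / 2) ltac:(lra)). intros y Hy.
    apply (RInt_correct (V := R_CompleteNormedModule)), ex_RInt_f; try lra.
    unfold ball in Hy; simpl in Hy; unfold AbsRing_ball, abs, minus, plus, opp in Hy; simpl in Hy.
    apply Rabs_lt_between in Hy. lra.
  - apply f_continuous; auto.
Qed.

Lemma f_bounded_01 : exists B, forall x, 0 < x <= 1 -> Rabs (f x) <= B.
Proof.
  destruct Hf as [[_ Hlim] _].
  destruct (proj1 (filterlim_locally f (f 0)) Hlim (mkposreal 1 Rlt_0_1)) as [e He].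
  simpl in He. pose proof (cond_pos e).
  set (e' := Rmin (e / 2) 1).
  assert (0 < e') by (unfold e'; apply Rmin_case; lra).
  assert (e' <= 1) by apply Rmin_r.
  assert (e' <= e / 2) by apply Rmin_l.
  destruct (continuous_bounded_segment f e' 1 ltac:(lra)) as [B HB].
  { intros x Hx. apply f_continuous. lra. }
  exists (Rmax B (Rabs (f 0) + 1)). intros x Hx.
  destruct (Rle_lt_dec e' x).
  - eapply Rle_trans; [apply HB; lra | apply Rmax_l].
  - assert (Hb : ball 0 e x).
    { unfold ball; simpl; unfold AbsRing_ball, abs, minus, plus, opp; simpl.
      rewrite Ropp_0, Rplus_0_r, Rabs_right by lra. lra. }
    specialize (He x Hb ltac:(lra)).
    unfold ball in He; simpl in He; unfold AbsRing_ball, abs, minus, plus, opp in He; simpl in He.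
    eapply Rle_trans; [| apply Rmax_r].
    pose proof (Rabs_triang_inv (f x) (f 0)). unfold Rminus in *. lra.
Qed.

Lemma Fpot_bounded_01 : exists B, 0 < B /\ forall r, 0 < r <= 1 -> Fpot f r <= B.
Proof.
  destruct f_bounded_01 as [B HB].
  exists (Rabs B + 1). split; [pose proof (Rabs_pos B); lra |].
  intros r Hr. unfold Fpot.
  apply Rle_trans with (RInt (fun _ => Rabs B) r 1).
  - apply RInt_le; [lra | apply ex_RInt_f; lra | apply ex_RInt_const |].
    intros x Hx. pose proof (HB x ltac:(lra)). pose proof (Rle_abs B).
    pose proof (Rle_abs (f x)). lra.
  - rewrite RInt_const. unfold scal; simpl; unfold mult; simpl.
    pose proof (Rabs_pos B). nra.
Qed.

Lemma cs_pos : 0 < cs f.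
Proof. destruct Hf as (_ & _ & Hd & _). apply sqrt_lt_R0. lra. Qed.

Variable c : R.

Lemma G_is_derive s : s < 1 -> is_derive (G f c) s (dG f c s).
Proof.
  intros Hs. unfold G, dG.
  pose proof (Fpot_is_derive (1 - s) ltac:(lra)) as HF.
  auto_derive; [exists (- f (1 - s)); exact HF |].
  eta_reduce. replace (1 + - s) with (1 - s) by ring.
  rewrite (is_derive_unique _ _ _ HF). ring.
Qed.

Lemma dG_is_derive s : s < 1 -> is_derive (dG f c) s (ddG f c s).
Proof.
  intros Hs. unfold dG, ddG.
  pose proof (Fpot_is_derive (1 - s) ltac:(lra)) as HF.
  pose proof (f_derivable (1 - s) ltac:(lra)).
  auto_derive; [repeat split; auto; exists (- f (1 - s)); exact HF |].
  eta_reduce. replace (1 + - s) with (1 - s) by ring.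
  rewrite (is_derive_unique _ _ _ HF). ring.
Qed.

Lemma ddG_continuous s : s < 1 -> continuous (ddG f c) s.
Proof.
  intros Hs. apply derivable_continuous. unfold ddG.
  pose proof (Derive_f_derivable (1 - s) ltac:(lra)).
  pose proof (f_derivable (1 - s) ltac:(lra)).
  auto_derive. auto.
Qed.

Lemma G_0 : G f c 0 = 0 /\ dG f c 0 = 0.
Proof.
  destruct Hf as (_ & Hf1 & _). unfold G, dG.
  rewrite Rminus_0_r, Fpot_1, Hf1. split; ring.
Qed.

(* Taylor at a double zero [z] of [G]: two applications of the mean value theorem. *)
Lemma G_double_zero_quadratic_bound z : z < 1 -> G f c z = 0 -> dG f c z = 0 ->
  exists rho K, 0 < rho /\ 0 <= K /\
    forall s, Rabs (s - z) <= rho -> G f c s <= K * (s - z)^2.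
Proof.
  intros Hz HG HdG.
  set (rho := (1 - z) / 2).
  destruct (continuous_bounded_segment (ddG f c) (z - rho) (z + rho)) as [B HB].
  { unfold rho; lra. }
  { intros x Hx. apply ddG_continuous. unfold rho in Hx; lra. }
  exists rho, (Rabs B). split; [unfold rho; lra | split; [apply Rabs_pos |]].
  intros s Hsz.
  assert (Hnear : forall x y, Rmin z s <= x <= Rmax z s -> Rmin z x <= y <= Rmax z x ->
                    z - rho <= y <= z + rho /\ y < 1).
  { intros x y Hx Hy.
    pose proof (Rle_trans _ _ _ (Rabs_between_le z x y Hy)
                  (Rle_trans _ _ _ (Rabs_between_le z s x Hx) Hsz)) as Hyz.
    apply Rabs_le_between in Hyz. unfold rho in *. lra. }
  assert (HdGx : forall x, Rmin z s <= x <= Rmax z s ->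
                   Rabs (dG f c x) <= Rabs B * Rabs (s - z)).
  { intros x Hx.
    pose proof (MVT_Rabs_le (dG f c) (ddG f c) z x (Rabs B)) as Hm.
    rewrite HdG, Rminus_0_r in Hm.
    eapply Rle_trans; [apply Hm |].
    - intros y Hy. apply dG_is_derive, (Hnear x y Hx Hy).
    - intros y Hy. eapply Rle_trans; [apply HB, (Hnear x y Hx Hy) | apply Rle_abs].
    - apply Rmult_le_compat_l; [apply Rabs_pos | apply Rabs_between_le; auto]. }
  pose proof (MVT_Rabs_le (G f c) (dG f c) z s (Rabs B * Rabs (s - z))) as Hm.
  rewrite HG, Rminus_0_r in Hm.
  assert (HGs : Rabs (G f c s) <= Rabs B * Rabs (s - z) * Rabs (s - z)).
  { apply Hm; auto. intros x Hx. apply G_is_derive, (Hnear x x Hx).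
    split; [apply Rmin_r | apply Rmax_r]. }
  rewrite Rmult_assoc, <- Rabs_mult, (Rabs_right ((s - z) * (s - z))) in HGs
    by (apply Rle_ge, Rle_0_sqr).
  pose proof (Rle_abs (G f c s)). replace ((s - z)^2) with ((s - z) * (s - z)) by ring. lra.
Qed.

(* (H1) gives [G f c s >= ((1 - s) c_s^2 - c^2) s^2]. *)
Lemma G_pos s : 0 < c -> s <> 0 -> s < 1 - c^2 / (cs f)^2 -> 0 < G f c s.
Proof.
  intros Hc Hs0 Hsl. pose proof cs_pos.
  destruct Hf as (_ & _ & _ & H1 & _).
  assert (Hc2 : 0 < c^2 / (cs f)^2) by (apply Rdiv_lt_0_compat; nra).
  specialize (H1 (1 - s) ltac:(lra)). replace (1 - (1 - s)) with s in H1 by ring.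
  assert (Hk : c^2 < (cs f)^2 * (1 - s)).
  { apply (Rmult_lt_compat_l ((cs f)^2)) in Hsl; [| nra].
    replace ((cs f)^2 * (1 - c^2 / (cs f)^2)) with ((cs f)^2 - c^2) in Hsl by (field; nra).
    nra. }
  assert (0 < s^2) by (apply pow2_gt_0; auto).
  assert (4 * (1 - s) * ((cs f)^2 / 4 * s^2) <= 4 * (1 - s) * Fpot f (1 - s))
    by (apply Rmult_le_compat_l; lra).
  unfold G. nra.
Qed.

End Nonlinearity.

Section TravellingWave.

Variables (f : R -> R) (c : R) (eta v : R -> R).
Hypothesis Hf : standing_assumptions f.
Hypothesis Htw : TW_solution f c eta v.

Lemma eta_derivable x : ex_derive eta x.
Proof. destruct Htw as (Hd & _). auto. Qed.

Lemma Derive_eta_derivable x : ex_derive (Derive eta) x.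
Proof. destruct Htw as (_ & Hd & _). auto. Qed.

Lemma eta_continuous x : continuous eta x.
Proof. apply derivable_continuous, eta_derivable. Qed.

Lemma Derive_eta_continuous x : continuous (Derive eta) x.
Proof. apply derivable_continuous, Derive_eta_derivable. Qed.

Lemma eta_lt_1 x : eta x < 1.
Proof. destruct Htw as (_ & _ & _ & _ & _ & _ & [m [Hm Hb]] & _). specialize (Hb x). lra. Qed.

Lemma eta_even x : eta (- x) = eta x.
Proof. destruct Htw as (_ & _ & _ & _ & _ & _ & _ & Hev & _). auto. Qed.

Lemma eta_ode x :
  Derive (Derive eta) x =
  2 * (1 - eta x) * (f (1 - eta x) - (c * eta x / (2 * (1 - eta x)))^2
                     - c * (c * eta x / (2 * (1 - eta x))))
  - (Derive eta x)^2 / (2 * (1 - eta x)).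
Proof.
  pose proof (eta_lt_1 x).
  destruct Htw as (_ & _ & _ & _ & _ & _ & _ & _ & _ & _ & Hv & Hode).
  assert (Ev : v x = c * eta x / (2 * (1 - eta x)))
    by (specialize (Hv x); field_simplify_eq; lra).
  specialize (Hode x). rewrite Ev in Hode. rewrite Hode. field. lra.
Qed.

Lemma Derive_eta_0 : Derive eta 0 = 0.
Proof.
  assert (Derive eta 0 = Derive (fun x => eta (- x)) 0)
    by (apply Derive_ext; intros; rewrite eta_even; auto).
  assert (Derive (fun x => eta (- x)) 0 = - Derive eta 0).
  { apply is_derive_unique. pose proof (eta_derivable (- 0)).
    auto_derive; auto. eta_reduce. rewrite Ropp_0. ring. }
  lra.
Qed.

Lemma eta_vanishes eps : 0 < eps -> exists A, forall t, A <= t -> Rabs (eta t) < eps.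
Proof.
  destruct Htw as (_ & _ & _ & HL & HL' & _).
  apply H1_vanishes_at_p_infty; auto using eta_derivable, Derive_eta_derivable.
Qed.

Definition energy x : R :=
  (Derive eta x)^2 / (1 - eta x) - 4 * Fpot f (1 - eta x) + c^2 * (eta x)^2 / (1 - eta x).

Lemma energy_is_derive x : is_derive energy x 0.
Proof.
  pose proof (eta_lt_1 x).
  pose proof (eta_derivable x). pose proof (Derive_eta_derivable x).
  pose proof (Fpot_is_derive f Hf (1 - eta x) ltac:(lra)) as HF.
  unfold energy. auto_derive.
  - repeat split; auto; try lra. exists (- f (1 - eta x)). exact HF.
  - eta_reduce. replace (1 + - eta x) with (1 - eta x) by ring.
    rewrite (is_derive_unique _ _ _ HF), eta_ode. field. lra.
Qed.

Lemma potential_part_vanishes e : 0 < e -> exists A, forall t, A <= t ->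
  Rabs (eta t) < 1 / 2 /\
  Rabs (4 * Fpot f (1 - eta t) - c^2 * (eta t)^2 / (1 - eta t)) < e.
Proof.
  intros He.
  set (phi := fun s => 4 * Fpot f (1 - s) - c^2 * s^2 / (1 - s)).
  assert (Hphi : continuous phi 0).
  { apply derivable_continuous. unfold phi.
    pose proof (Fpot_is_derive f Hf (1 - 0) ltac:(lra)) as HF.
    auto_derive. repeat split; try lra. exists (- f (1 - 0)). exact HF. }
  destruct (continuous_Rabs_lt phi 0 Hphi e He) as [d [Hd Hphid]].
  destruct (eta_vanishes (Rmin d (1 / 2)) ltac:(apply Rmin_case; lra)) as [A HA].
  exists A. intros t Ht. specialize (HA t Ht).
  pose proof (Rmin_l d (1 / 2)). pose proof (Rmin_r d (1 / 2)).
  split; [lra |].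
  specialize (Hphid (eta t) ltac:(rewrite Rminus_0_r; lra)).
  unfold phi in Hphid. rewrite Rminus_0_r, Fpot_1 in Hphid.
  replace (4 * 0 - c^2 * 0^2 / 1) with 0 in Hphid by field.
  rewrite Rminus_0_r in Hphid. exact Hphid.
Qed.

(* Far out the potential part of the energy vanishes, so [eta'^2 / (1 - eta)] tends
   to the constant energy; square integrability of [eta'] forces it to be [0]. *)
Lemma energy_0 : energy 0 = 0.
Proof.
  set (C := energy 0).
  assert (HQ : forall t, (Derive eta t)^2 / (1 - eta t) =
                 C + (4 * Fpot f (1 - eta t) - c^2 * (eta t)^2 / (1 - eta t))).
  { intros t. assert (Et : energy t = C) by apply (is_derive_0_constant _ energy_is_derive).
    rewrite <- Et. unfold energy. ring. }
  apply NNPP; intro HC.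
  destruct (potential_part_vanishes (Rabs C / 2)) as [A HA];
    [pose proof (Rabs_pos_lt C HC); lra |].
  destruct (Rlt_le_dec C 0) as [Hn | Hp].
  - destruct (HA A (Rle_refl A)) as [_ HAA].
    rewrite (Rabs_left C) in HAA by lra. apply Rabs_lt_between in HAA.
    pose proof (HQ A). pose proof (eta_lt_1 A).
    assert (0 <= (Derive eta A)^2 / (1 - eta A))
      by (apply Rdiv_le_0_compat; [apply pow2_ge_0 | lra]).
    lra.
  - assert (Hp' : 0 < C) by (destruct Hp; [auto | congruence]).
    destruct Htw as (_ & _ & _ & _ & HL' & _).
    destruct (L2_exists_small_value _ Derive_eta_derivable HL' (C / 4) ltac:(lra))
      as [A' HA'].
    destruct (HA' (Rmax A A') (Rmax_r A A')) as [s [Hs Hsmall]].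
    pose proof (Rmax_l A A').
    destruct (HA s ltac:(lra)) as [Hes HAs].
    rewrite (Rabs_right C) in HAs by lra.
    apply Rabs_lt_between in Hes. apply Rabs_lt_between in HAs.
    pose proof (HQ s).
    assert (Hk : C / 2 < (Derive eta s)^2 / (1 - eta s)) by lra.
    assert (Hpos : 1 / 2 < 1 - eta s) by lra.
    replace ((Derive eta s)^2) with ((Derive eta s)^2 / (1 - eta s) * (1 - eta s))
      in Hsmall by (field; lra).
    nra.
Qed.

Lemma first_integral x : (Derive eta x)^2 = G f c (eta x).
Proof.
  pose proof (is_derive_0_constant _ energy_is_derive x) as HQ.
  rewrite energy_0 in HQ. pose proof (eta_lt_1 x).
  unfold energy in HQ.
  replace ((Derive eta x)^2) with ((1 - eta x) * ((Derive eta x)^2 / (1 - eta x)))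
    by (field; lra).
  replace ((Derive eta x)^2 / (1 - eta x))
    with (4 * Fpot f (1 - eta x) - c^2 * (eta x)^2 / (1 - eta x)) by lra.
  unfold G. field. lra.
Qed.

(* Uniqueness for [eta'^2 = G (eta)] at a double zero of [G]: the constant [z] is a
   solution, and [eta] is not constant. *)
Lemma eta_avoids_double_zero z : z < 1 -> G f c z = 0 -> dG f c z = 0 -> forall t, eta t <> z.
Proof.
  intros Hz HG HdG t0 Ht0.
  destruct (G_double_zero_quadratic_bound f Hf c z Hz HG HdG) as [rho [K [Hr [HK Hb]]]].
  assert (Hb' : forall t, Rabs (eta t - z) <= rho -> (Derive eta t)^2 <= K * (eta t - z)^2)
    by (intros t Ht; rewrite first_integral; auto).
  assert (Hall : forall t, eta t = z).
  { intros t. destruct (Rle_dec t0 t).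
    - exact (quadratic_bound_zero_forward eta z K rho Hr HK eta_derivable Hb' t0 t Ht0 r).
    - rewrite <- eta_even.
      apply (quadratic_bound_zero_forward eta z K rho Hr HK eta_derivable Hb' (- t0));
        [rewrite eta_even; auto | lra]. }
  destruct Htw as (_ & _ & _ & _ & _ & _ & _ & _ & _ & [x [y Hxy]] & _).
  apply Hxy. rewrite !Hall. auto.
Qed.

Lemma G_at_critical_point t : Derive eta t = 0 -> G f c (eta t) = 0.
Proof. intros H0. rewrite <- first_integral, H0. ring. Qed.

Lemma Derive2_eta_at_critical_point t :
  Derive eta t = 0 -> Derive (Derive eta) t = dG f c (eta t) / 2.
Proof.
  intros H0. pose proof (eta_lt_1 t). set (s := eta t) in *.
  assert (E : dG f c s = 4 * (1 - s) * (f (1 - s) - (c * s / (2 * (1 - s)))^2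
                                        - c * (c * s / (2 * (1 - s))))
                         - G f c s / (1 - s))
    by (unfold dG, G; field; lra).
  pose proof (G_at_critical_point t H0) as HG. fold s in HG.
  rewrite eta_ode, H0, E, HG. fold s. field. lra.
Qed.

Section Subsonic.

Hypothesis Hc : 0 < c.
Hypothesis Hcs : c < cs f.

Lemma speed_ratio_lt_1 : 0 < 1 - c^2 / (cs f)^2.
Proof.
  pose proof (cs_pos f Hf).
  enough (c^2 / (cs f)^2 < 1) by lra.
  apply (Rmult_lt_reg_r ((cs f)^2)); [nra |].
  replace (c^2 / (cs f)^2 * (cs f)^2) with (c^2) by (field; lra). nra.
Qed.

Lemma eta_0_pos : 0 < eta 0.
Proof.
  pose proof (G_at_critical_point 0 Derive_eta_0) as HG.
  pose proof speed_ratio_lt_1.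
  destruct (Rtotal_order (eta 0) 0) as [h | [h | h]]; auto; exfalso.
  - pose proof (G_pos f Hf c (eta 0) Hc (Rlt_not_eq _ _ h)). lra.
  - destruct (G_0 f Hf c) as [HG0 HdG0].
    exact (eta_avoids_double_zero 0 Rlt_0_1 HG0 HdG0 0 h).
Qed.

Lemma eta_pos t : 0 < eta t.
Proof.
  apply Rnot_le_lt. intro Ht. pose proof eta_0_pos.
  destruct (IVT_gen eta 0 t 0) as [x [_ Hx]].
  { intros x. apply continuity_pt_filterlim, eta_continuous. }
  { rewrite Rmin_right, Rmax_left by lra. lra. }
  destruct (G_0 f Hf c) as [HG0 HdG0].
  exact (eta_avoids_double_zero 0 Rlt_0_1 HG0 HdG0 x Hx).
Qed.

Lemma eta_eventually_not_critical : exists A, forall t, A <= t -> Derive eta t <> 0.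
Proof.
  destruct (eta_vanishes _ speed_ratio_lt_1) as [A HA].
  exists A. intros t Ht H0. specialize (HA t Ht). apply Rabs_lt_between in HA.
  pose proof (G_pos f Hf c (eta t) Hc (Rgt_not_eq _ _ (eta_pos t)) ltac:(lra)) as HG.
  rewrite (G_at_critical_point t H0) in HG. lra.
Qed.

Lemma last_critical_point :
  exists T, 0 <= T /\ Derive eta T = 0 /\ forall t, T < t -> Derive eta t < 0.
Proof.
  destruct eta_eventually_not_critical as [A HA].
  pose proof (Rmax_l A 0). pose proof (Rmax_r A 0). set (A' := Rmax A 0) in *.
  set (W := fun t => 0 <= t <= A' /\ Derive eta t = 0).
  assert (HW : bound W) by (exists A'; intros x [Hx _]; lra).
  assert (HW0 : W 0) by (split; [lra | exact Derive_eta_0]).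
  destruct (completeness W HW (ex_intro _ 0 HW0)) as [T HT].
  destruct (lub_of_zeros_is_zero (Derive eta) 0 0 A' T Derive_eta_continuous HT
              Derive_eta_0 ltac:(lra)) as [HdT HTA].
  exists T. split; [lra | split; [exact HdT |]].
  apply (Derive_neg_of_vanishing eta T eta_derivable Derive_eta_continuous eta_pos eta_vanishes).
  intros t Ht Hz.
  destruct (Rle_dec t A').
  - assert (t <= T) by (apply (proj1 HT); split; [lra | auto]). lra.
  - apply (HA t); [lra | auto].
Qed.

Section LastCriticalPoint.

Variable T : R.
Hypothesis HT0 : 0 <= T.
Hypothesis HdT : Derive eta T = 0.
Hypothesis HTneg : forall t, T < t -> Derive eta t < 0.

Lemma eta_decreasing_after a b : T <= a < b -> eta b < eta a.
Proof.
  intros Hab.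
  destruct (MVT_cor2 eta (Derive eta) a b ltac:(lra)) as [xi [Hxi Hxir]].
  { intros; apply is_derive_Reals, Derive_correct, eta_derivable. }
  specialize (HTneg xi ltac:(lra)).
  assert (Derive eta xi * (b - a) < 0) by (apply Rmult_neg_pos; lra). lra.
Qed.

Lemma G_pos_below_last_critical_value s : 0 < s < eta T -> 0 < G f c s.
Proof.
  intros Hs. destruct (eta_vanishes s ltac:(lra)) as [A HA].
  set (b := Rmax A T + 1). pose proof (Rmax_l A T). pose proof (Rmax_r A T).
  specialize (HA b ltac:(unfold b; lra)). apply Rabs_lt_between in HA.
  destruct (IVT_gen eta T b s) as [t [Ht Hts]].
  { intros x. apply continuity_pt_filterlim, eta_continuous. }
  { rewrite Rmin_right, Rmax_left by lra. lra. }
  rewrite Rmin_left, Rmax_right in Ht by (unfold b; lra).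
  assert (HTt : T < t) by (destruct (Req_dec T t); [subst; lra | lra]).
  specialize (HTneg t HTt). rewrite <- Hts, <- first_integral. nra.
Qed.

(* [eta T] is a simple zero of [G], so [eta''(T) <> 0]; it cannot be positive since
   [eta'] is negative right after [T]. *)
Lemma eta_below_last_critical_value_left : exists d, 0 < d /\
  forall t, T - d < t < T -> eta t < eta T.
Proof.
  set (l := Derive (Derive eta) T).
  assert (Hl : l <> 0).
  { unfold l. rewrite Derive2_eta_at_critical_point by auto. intro H0.
    apply (eta_avoids_double_zero (eta T) (eta_lt_1 T) (G_at_critical_point T HdT)
             ltac:(lra) T). reflexivity. }
  assert (Hd : derivable_pt_lim (Derive eta) T l)
    by (apply is_derive_Reals, Derive_correct, Derive_eta_derivable).
  destruct (sign_near_simple_zero (Derive eta) T l HdT Hd Hl) as [d [Hdp Hsign]].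
  assert (Hln : l < 0).
  { destruct (Rtotal_order l 0) as [? | [? | Hlp]]; [auto | contradiction |].
    specialize (Hsign (T + d / 2) ltac:(rewrite Rabs_right; lra)).
    specialize (HTneg (T + d / 2) ltac:(lra)).
    replace (T + d / 2 - T) with (d / 2) in Hsign by ring.
    assert (Derive eta (T + d / 2) / (d / 2) < 0)
      by (apply Rdiv_neg_pos; lra). nra. }
  exists d. split; [auto |]. intros t Ht.
  assert (Hpos : forall y, T - d < y < T -> 0 < Derive eta y).
  { intros y Hy. specialize (Hsign y ltac:(rewrite Rabs_left; lra)).
    assert (Hq : Derive eta y / (y - T) < 0) by nra.
    apply Rnot_le_lt. intro.
    enough (0 <= Derive eta y / (y - T)) by lra.
    replace (Derive eta y / (y - T)) with (- Derive eta y / (T - y)) by (field; lra).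
    apply Rdiv_le_0_compat; lra. }
  destruct (MVT_cor2 eta (Derive eta) t T ltac:(lra)) as [xi [Hxi Hxir]].
  { intros; apply is_derive_Reals, Derive_correct, eta_derivable. }
  specialize (Hpos xi ltac:(lra)).
  assert (0 < Derive eta xi * (T - t)) by (apply Rmult_lt_0_compat; lra). lra.
Qed.

(* An interior minimum of [eta] on [[x, T]] would be a critical point with a value in
   [(0, eta T)], where [G > 0]. *)
Lemma eta_le_last_critical_value x : 0 <= x -> eta x <= eta T.
Proof.
  intros Hx.
  destruct (Rle_dec T x) as [h | h].
  { destruct (Req_dec T x) as [<- | ?]; [lra |]. left. apply eta_decreasing_after. lra. }
  apply Rnot_lt_le. intro Hgt.
  destruct eta_below_last_critical_value_left as [d [Hd Hleft]].
  set (p := (Rmax x (T - d) + T) / 2).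
  pose proof (Rmax_l x (T - d)). pose proof (Rmax_r x (T - d)).
  pose proof (Rmax_lub_lt x (T - d) T ltac:(lra) ltac:(lra)).
  assert (Hp : eta p < eta T) by (apply Hleft; unfold p; lra).
  destruct (continuity_ab_min eta x T ltac:(lra)) as [m [Hm Hmr]].
  { intros y _. apply continuity_pt_filterlim, eta_continuous. }
  assert (Hmp : eta m <= eta p) by (apply Hm; unfold p; lra).
  assert (Hxm : x < m) by (destruct (Req_dec x m); [subst; lra | lra]).
  assert (HmT : m < T) by (destruct (Req_dec m T); [subst; lra | lra]).
  assert (Hdm : Derive eta m = 0).
  { pose (pr := exist (fun l => derivable_pt_lim eta m l) (Derive eta m)
                  (proj1 (is_derive_Reals _ _ _) (Derive_correct _ _ (eta_derivable m)))
                : derivable_pt eta m).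
    change (derive_pt eta m pr = 0). apply (deriv_minimum eta x T m pr Hxm HmT).
    intros y Hy1 Hy2. apply Hm. lra. }
  pose proof (G_pos_below_last_critical_value (eta m) ltac:(pose proof (eta_pos m); lra))
    as HGm.
  rewrite (G_at_critical_point m Hdm) in HGm. lra.
Qed.

Lemma eta_0_eq_last_critical_value : eta 0 = eta T.
Proof.
  apply Rle_antisym; [apply eta_le_last_critical_value; lra |].
  apply Rnot_lt_le. intro Hl.
  pose proof (G_pos_below_last_critical_value (eta 0) (conj eta_0_pos Hl)) as HG0.
  rewrite (G_at_critical_point 0 Derive_eta_0) in HG0. lra.
Qed.

End LastCriticalPoint.

Lemma eta_max_at_0 x : eta x <= eta 0.
Proof.
  destruct last_critical_point as [T [HT0 [HdT Hneg]]].
  rewrite (eta_0_eq_last_critical_value T HT0 HdT Hneg).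
  destruct (Rle_dec 0 x).
  - apply eta_le_last_critical_value; auto.
  - rewrite <- eta_even. apply eta_le_last_critical_value; auto. lra.
Qed.
End Subsonic.
End TravellingWave.

(* [G f c s = 0] reads [c^2 s^2 = 4 (1 - s) F (1 - s)], which bounds [1 - s] from below
   by [c^2 / (16 B)] as soon as [s > 1/2]. *)
Lemma G_zero_upper_bound f c B s : standing_assumptions f -> 0 < c < cs f ->
  0 < B -> (forall r, 0 < r <= 1 -> Fpot f r <= B) ->
  0 < s < 1 -> G f c s = 0 ->
  s <= 1 - Rmin (1 / 2) ((cs f)^2 / (16 * B)) * c^2 / (cs f)^2.
Proof.
  intros Hf Hcs HB HFB Hs HG. pose proof (cs_pos f Hf) as Hcs0.
  set (d := Rmin (1 / 2) ((cs f)^2 / (16 * B))).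
  assert (Hd1 : d <= 1 / 2) by apply Rmin_l.
  assert (Hd2 : d <= (cs f)^2 / (16 * B)) by apply Rmin_r.
  assert (Hd0 : 0 < d) by (unfold d; apply Rmin_case; [lra | apply Rdiv_lt_0_compat; nra]).
  replace (d * c^2 / (cs f)^2) with (d * (c^2 / (cs f)^2)) by (field; lra).
  assert (Hratio : 0 <= c^2 / (cs f)^2 <= 1).
  { split; [apply Rdiv_le_0_compat; nra |].
    apply (Rmult_le_reg_r ((cs f)^2)); [nra |].
    replace (c^2 / (cs f)^2 * (cs f)^2) with (c^2) by (field; lra). nra. }
  destruct (Rle_dec s (1 / 2)); [nra |].
  assert (HF : Fpot f (1 - s) <= B) by (apply HFB; lra).
  unfold G in HG.
  assert (Hq : c^2 / (16 * B) <= 1 - s).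
  { apply (Rmult_le_reg_r (16 * B)); [lra |].
    replace (c^2 / (16 * B) * (16 * B)) with (c^2) by (field; lra).
    assert (1 / 4 <= s^2) by nra. nra. }
  assert (Hdc : d * (c^2 / (cs f)^2) <= (cs f)^2 / (16 * B) * (c^2 / (cs f)^2)) by nra.
  replace ((cs f)^2 / (16 * B) * (c^2 / (cs f)^2)) with (c^2 / (16 * B)) in Hdc
    by (field; lra).
  lra.
Qed.

Lemma speed_pos f (c : R) : Rbar_lt (c0 f) c -> 0 < c.
Proof.
  intros H. unfold c0 in H.
  destruct (Glb_Rbar_correct (fun c => 0 < c < cs f /\ has_TW f c)) as [_ Hglb].
  assert (Hl : Rbar_le (Finite 0) (Glb_Rbar (fun c => 0 < c < cs f /\ has_TW f c)))
    by (apply Hglb; intros x [[Hx _] _]; simpl; lra).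
  exact (Rbar_le_lt_trans _ _ (Finite c) Hl H).
Qed.

Theorem mainTheorem4 (f : R -> R) :
  standing_assumptions f ->
  exists delta, 0 < delta < 1 /\
    forall (c : R) (eta v : R -> R),
      Rbar_lt (c0 f) c -> c < cs f ->
      TW_solution f c eta v ->
      (forall x, eta x <= eta 0) /\
      eta 0 <= 1 - delta ^ 2 * c ^ 2 / (cs f) ^ 2.
Proof.
  intros Hf.
  destruct (Fpot_bounded_01 f Hf) as [B [HB HFB]].
  pose proof (cs_pos f Hf).
  set (d := Rmin (1 / 2) ((cs f)^2 / (16 * B))).
  assert (Hd : 0 < d <= 1 / 2).
  { split; [apply Rmin_case; [lra | apply Rdiv_lt_0_compat; nra] | apply Rmin_l]. }
  exists (sqrt d). split.
  { split; [apply sqrt_lt_R0; lra |].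
    rewrite <- sqrt_1. apply sqrt_lt_1_alt. lra. }
  intros c eta v Hc0 Hcs Htw.
  pose proof (speed_pos f c Hc0) as Hc.
  split; [exact (eta_max_at_0 f c eta v Hf Htw Hc Hcs) |].
  rewrite pow2_sqrt by lra.
  apply (G_zero_upper_bound f c B); auto.
  - split; [exact (eta_0_pos f c eta v Hf Htw Hc Hcs) | apply (eta_lt_1 f c eta v Htw)].
  - exact (G_at_critical_point f c eta v Hf Htw 0 (Derive_eta_0 f c eta v Htw)).
Qed.
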